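(* Let $N\ge 2$ and $R\ge 3$. For every deterministic online algorithm for routing in the Clos network $C_{N,R}$, there is a sequence of flows, each with demand $1$ (and satisfying the demand assumption below), for which the routing returned by the algorithm has congestion at least $2$.
   Context: Clos network $C_{N,R}$: a directed graph with $N$ middle switches $M_1,\dots,M_N$, $R$ input switches $I_1,\dots,I_R$, $R$ output switches $O_1,\dots,O_R$, source servers $s_i^k$ and destination servers $t_i^k$ ($i\in[R]$, $k\in[N]$), and edges $s_i^kI_i$, $I_iM_m$, $M_mO_i$, $O_it_i^k$ for all $i\in[R]$, $m,k\in[N]$; all links have capacity $1$. A flow $f$ has a source server $s(f)$ of input switch $I_{i(f)}$, a destination server $t(f)$ of output switch $O_{j(f)}$, and a positive demand $\mathrm{dem}(f)$; a set of flows must have total demand at most $1$ leaving each source server and entering each destination server (so with unit demands, at most one flow per source server and per destination server). A routing $r$ assigns each flow a single middle switch $r(f)\in[N]$; its congestion is $\max_{i\in[R],m\in[N]}\max\{\sum_{f:i(f)=i,r(f)=m}\mathrm{dem}(f),\ \sum_{f:j(f)=i,r(f)=m}\mathrm{dem}(f)\}$. A deterministic online algorithm receives flows one at a time and must irrevocably assign each flow a middle switch before seeing the next; formally it defines a routing for every sequence of flows such that for every prefix $P$ of a sequence $F$, the routing of $P$ when given $P$ equals the routing of $P$ when given $F$. *)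

From mathcomp Require Import all_boot all_order all_algebra.
Set Implicit Arguments. Unset Strict Implicit. Unset Printing Implicit Defensive.
Import Order.TTheory GRing.Theory Num.Theory.
Local Open Scope ring_scope.

(* Clos network C_{N,R}: input switches I_i, output switches O_i (i : 'I_R),
   middle switches M_m (m : 'I_N), source servers s_i^k, destination servers
   t_j^k (k : 'I_N).  Indices are 0-based. *)

(* A flow: source server s_{fin}^{fsrc} (of input switch I_{fin}),
   destination server t_{fout}^{fdst} (of output switch O_{fout}), demand fdem. *)
Record flow (N R : nat) := Flow {
  fin  : 'I_R;  fsrc : 'I_N;
  fout : 'I_R;  fdst : 'I_N;
  fdem : rat }.

(* A routing of a sequence of flows F is a sequence of middle switches,
   the p-th one being the middle switch of the p-th flow of F. *)

Definition load_in N R (F : seq (flow N R)) (r : seq 'I_N) (i : 'I_R) (m : 'I_N) : rat :=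
  \sum_(x <- zip F r | (fin x.1 == i) && (x.2 == m)) fdem x.1.

Definition load_out N R (F : seq (flow N R)) (r : seq 'I_N) (i : 'I_R) (m : 'I_N) : rat :=
  \sum_(x <- zip F r | (fout x.1 == i) && (x.2 == m)) fdem x.1.

Definition congestion N R (F : seq (flow N R)) (r : seq 'I_N) : rat :=
  \big[Num.max/0]_(i : 'I_R) \big[Num.max/0]_(m : 'I_N)
     Num.max (load_in F r i m) (load_out F r i m).

Definition demand_ok N R (F : seq (flow N R)) : Prop :=
  (forall f, f \in map (@fdem N R) F -> 0 < f) /\
  (forall (i : 'I_R) (k : 'I_N),
      \sum_(f <- F | (fin f == i) && (fsrc f == k)) fdem f <= 1) /\
  (forall (j : 'I_R) (k : 'I_N),
      \sum_(f <- F | (fout f == j) && (fdst f == k)) fdem f <= 1).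

Definition online_alg N R (alg : seq (flow N R) -> seq 'I_N) : Prop :=
  (forall F, size (alg F) = size F) /\
  (forall P S, alg P = take (size P) (alg (P ++ S))).

From mathcomp Require Import all_boot all_order all_algebra.
Import Order.TTheory GRing.Theory Num.Theory.
Set Implicit Arguments. Unset Strict Implicit. Unset Printing Implicit Defensive.
Local Open Scope ring_scope.

(* Write N = n + 2 and route, with pairwise distinct servers, n + 1 unit flows
   from I_0 to O_0 and n + 1 unit flows from I_1 to O_1.  If the congestion
   stays below 2, each of these blocks uses pairwise distinct middle switches,
   hence misses exactly one middle switch, m_0 resp. m_1.  The adversary now
   continues in one of two ways.  A further flow from I_0 to O_1 must use a
   switch missed by both blocks, so m_0 = m_1.  Two further flows from I_2,
   one to O_0 and one to O_1, must use m_0 and m_1 respectively, so they share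
   the link from I_2 to M_(m_0).  Since the algorithm routes the common prefix
   identically in both continuations, one of them has congestion 2. *)

Lemma sumr_unit_count (T : Type) (V : pzSemiRingType) (s : seq T) (P : pred T)
    (d : T -> V) :
  all (fun x => d x == 1) s -> \sum_(x <- s | P x) d x = (count P s)%:R.
Proof.
elim: s => [|x s IH] /=; first by rewrite big_nil.
case/andP=> /eqP dx /IH sum_s; rewrite big_cons sum_s natrD.
by case: (P x); rewrite ?dx ?add0r.
Qed.

Lemma all_zip_fst (S T : Type) (p : pred S) (s : seq S) (t : seq T) :
  all p s -> all (p \o fst) (zip s t).
Proof. by elim: s t => [|x s IH] [|y t] //= /andP[px /IH ->]; rewrite andbT. Qed.

Lemma count_mem_le1_uniq (T : eqType) (s : seq T) :
  (forall x, count_mem x s <= 1)%N -> uniq s.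
Proof.
move=> le1; apply: count_mem_uniq => x; rewrite -has_pred1 has_count.
by case: (count_mem x s) (le1 x) => [|[]].
Qed.

Lemma full_rcons_uniq_eq (T : finType) (s : seq T) (x y : T) :
  #|T| = (size s).+1 -> uniq (rcons s x) -> uniq (rcons s y) -> x = y.
Proof.
rewrite !rcons_uniq => cardT /andP[xNs us] /andP[yNs _].
apply/eqP/negPn/negP => xy.
have /card_uniqP card_xys : uniq [:: x, y & s] by rewrite /= inE negb_or xy xNs yNs.
by have := max_card (mem [:: x, y & s]); rewrite card_xys cardT ltnn.
Qed.

Lemma mem_allpairs_pair (S T : eqType) (s : seq S) (t : seq T) x y :
  ((x, y) \in [seq (a, b) | a <- s, b <- t]) = (x \in s) && (y \in t).
Proof.
apply/allpairsP/andP => [[[a b] [/= ? ? [-> ->]]] | [? ?]] //.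
by exists (x, y).
Qed.

Lemma uniq_allpairs_pair_cat (S T : eqType) (s : seq S) (t : seq T) e :
  uniq s -> uniq t -> uniq e -> all (fun p => (p.1 \notin s) || (p.2 \notin t)) e ->
  uniq ([seq (a, b) | a <- s, b <- t] ++ e).
Proof.
move=> us ut ue /allP eNst; rewrite cat_uniq ue andbT.
rewrite allpairs_uniq //=; last by move=> -[? ?] [? ?].
by apply/hasPn => -[x y] /eNst; rewrite mem_allpairs_pair negb_and.
Qed.

Section Routing.
Variables N R : nat.
Implicit Types (F P S : seq (flow N R)) (r : seq 'I_N) (i : 'I_R) (m : 'I_N).

(* With [side = fin] (resp. [fout]) these are the middle switches carrying
   flows over the links I_i M_m (resp. M_m O_i), with repetitions. *)
Definition link_switches (side : flow N R -> 'I_R) F r i : seq 'I_N :=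
  [seq x.2 | x <- zip F r & side x.1 == i].

Lemma link_switches_cat side P S r s i : size P = size r ->
  link_switches side (P ++ S) (r ++ s) i =
  link_switches side P r i ++ link_switches side S s i.
Proof. by move=> sPr; rewrite /link_switches zip_cat // filter_cat map_cat. Qed.

Lemma unit_link_load side F r i m : all (fun f => fdem f == 1) F ->
  \sum_(x <- zip F r | (side x.1 == i) && (x.2 == m)) fdem x.1 =
  (count_mem m (link_switches side F r i))%:R.
Proof.
move=> /(all_zip_fst r) unitF; rewrite sumr_unit_count; last exact: unitF.
rewrite count_map count_filter; congr _%:R.
by apply: eq_count => x; rewrite /= andbC.
Qed.

Lemma loads_le_congestion F r i m :
  Num.max (load_in F r i m) (load_out F r i m) <= congestion F r.
Proof.
apply: le_trans (le_bigmax _ _ i).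
exact: le_bigmax (fun m' => Num.max (load_in F r i m') (load_out F r i m')) m.
Qed.

Lemma low_congestion_uniq F r i :
  all (fun f => fdem f == 1) F -> congestion F r < 2 ->
  uniq (link_switches (@fin N R) F r i) /\ uniq (link_switches (@fout N R) F r i).
Proof.
move=> unitF lt2.
have loads_lt2 m : Num.max (load_in F r i m) (load_out F r i m) < 2.
  exact: le_lt_trans (loads_le_congestion F r i m) lt2.
have count_le1 side m : (count_mem m (link_switches side F r i))%:R < 2 :> rat ->
    (count_mem m (link_switches side F r i) <= 1)%N.
  by rewrite (ltr_nat rat) ltnS.
split; apply: count_mem_le1_uniq => m; apply: count_le1; apply: le_lt_trans (loads_lt2 m).
  by rewrite -unit_link_load // le_max lexx.
by rewrite -unit_link_load // le_max lexx orbT.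
Qed.

Definition source_server (f : flow N R) := (fin f, fsrc f).
Definition target_server (f : flow N R) := (fout f, fdst f).

Lemma demand_ok_unit F : all (fun f => fdem f == 1) F ->
  uniq (map source_server F) -> uniq (map target_server F) -> demand_ok F.
Proof.
move=> unitF usrc utgt.
have server_load_le1 (server : flow N R -> 'I_R * 'I_N) i k :
    uniq (map server F) -> \sum_(f <- F | server f == (i, k)) fdem f <= 1.
  move=> userver; rewrite sumr_unit_count // -(count_map server (pred1 (i, k))).
  by rewrite count_uniq_mem // lern1 leq_b1.
split; [|split].
- have /allP dem1 : all (pred1 1) (map (@fdem N R) F) by rewrite all_map.
  by move=> d /dem1/eqP ->; rewrite ltr01.
- by move=> i k; have := server_load_le1 _ i k usrc.
- by move=> j k; have := server_load_le1 _ j k utgt.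
Qed.

Definition block i (K : seq 'I_N) := [seq Flow i k i k 1 | k <- K].

Lemma unit_block i K : all (fun f => fdem f == 1) (block i K).
Proof. by rewrite all_map; apply/allP => k _; exact: eqxx. Qed.

Lemma source_servers_block i K : map source_server (block i K) = [seq (i, k) | k <- K].
Proof. by rewrite -map_comp. Qed.

Lemma target_servers_block i K : map target_server (block i K) = [seq (i, k) | k <- K].
Proof. by rewrite -map_comp. Qed.

Lemma link_switches_block side c K s i : (forall k, side (Flow c k c k 1) = c) ->
  size s = size K -> link_switches side (block c K) s i = if c == i then s else [::].
Proof.
move=> side_c; elim: K s => [|k K IH] [|x s] //=; first by case: ifP.
move=> -[/IH]; rewrite /link_switches /= side_c.
by case: (c == i) => /= ->.
Qed.

Lemma online_alg_cat (alg : seq (flow N R) -> seq 'I_N) P S : online_alg alg ->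
  exists2 t, alg (P ++ S) = alg P ++ t & size t = size S.
Proof.
case=> alg_size alg_prefix; exists (drop (size P) (alg (P ++ S))).
  by rewrite {1}(alg_prefix P S) cat_take_drop.
by rewrite size_drop alg_size size_cat addKn.
Qed.

End Routing.

Section Adversary.
Variables (n R : nat) (i0 i1 i2 : 'I_R).
Hypotheses (i01 : i0 != i1) (i02 : i0 != i2) (i12 : i1 != i2).
Variable alg : seq (flow n.+2 R) -> seq 'I_n.+2.
Hypothesis alg_online : online_alg alg.

Let neq_inputs := (eq_sym i1 i0, eq_sym i2 i0, eq_sym i2 i1,
  negbTE i01, negbTE i02, negbTE i12).

Let ord0_neq_max : (ord0 == ord_max :> 'I_n.+2) = false.
Proof. by rewrite -val_eqE. Qed.

Let K := rem ord_max (enum 'I_n.+2).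
Let P := block i0 K ++ block i1 K.
Let f01 : flow n.+2 R := Flow i0 ord_max i1 ord_max 1.
Let g20 : flow n.+2 R := Flow i2 ord0 i0 ord_max 1.
Let g21 : flow n.+2 R := Flow i2 ord_max i1 ord_max 1.
Let F1 := P ++ [:: f01].
Let F2 := P ++ [:: g20; g21].

Let K_uniq : uniq K. Proof. exact/rem_uniq/enum_uniq. Qed.
Let max_notin_K : ord_max \notin K. Proof. by rewrite mem_rem_uniqF ?enum_uniq. Qed.
Let size_K : size K = n.+1. Proof. by rewrite size_rem ?mem_enum // size_enum_ord. Qed.

Let servers_P : map (@source_server _ _) P = map (@target_server _ _) P /\
  map (@source_server _ _) P = [seq (i, k) | i <- [:: i0; i1], k <- K].
Proof. by rewrite !map_cat !source_servers_block !target_servers_block /= cats0. Qed.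

Let F1_F2_admissible :
  (all (fun f => fdem f == 1) F1 /\ demand_ok F1) /\
  (all (fun f => fdem f == 1) F2 /\ demand_ok F2).
Proof.
have unit_P : all (fun f => fdem f == 1) P by rewrite all_cat !unit_block.
have unit_F1 : all (fun f => fdem f == 1) F1 by rewrite all_cat unit_P.
have unit_F2 : all (fun f => fdem f == 1) F2 by rewrite all_cat unit_P.
do 2!split=> //; apply: demand_ok_unit => //;
  rewrite map_cat -?servers_P.1 servers_P.2 uniq_allpairs_pair_cat //= !inE;
  by rewrite ?xpair_eqE /= ?neq_inputs ?max_notin_K ?ord0_neq_max ?orbT ?andbF.
Qed.

Let r := alg P.
Let a := take (size K) r.
Let b := drop (size K) r.

Let size_r : size r = size K + size K.
Proof. by rewrite alg_online.1 size_cat !size_map. Qed.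

Let size_a : size a = n.+1.
Proof. by rewrite size_takel ?size_r ?leq_addr. Qed.

Let size_b : size b = n.+1.
Proof. by rewrite size_drop size_r addKn. Qed.

Let link_switches_ext side i e t : (forall c k, side (Flow c k c k 1) = c) ->
  link_switches side (P ++ e) (r ++ t) i =
  (if i0 == i then a else [::]) ++ (if i1 == i then b else [::]) ++
  link_switches side e t i.
Proof.
move=> side_c; have -> : r = a ++ b by rewrite cat_take_drop.
rewrite !link_switches_cat ?size_cat ?size_map ?size_a ?size_b ?size_K //.
by rewrite !link_switches_block ?size_a ?size_b ?size_K // catA.
Qed.

Let low_congestion_contra :
  congestion F1 (alg F1) < 2 -> congestion F2 (alg F2) < 2 -> False.
Proof.
move=> lt1 lt2; have [[unit_F1 _] [unit_F2 _]] := F1_F2_admissible.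
have [[|z []] // alg_F1 _] := online_alg_cat P [:: f01] alg_online.
have [[|w [|v []]] // alg_F2 _] := online_alg_cat P [:: g20; g21] alg_online.
have := (low_congestion_uniq i0 unit_F1 lt1).1.
have := (low_congestion_uniq i1 unit_F1 lt1).2.
have := (low_congestion_uniq i0 unit_F2 lt2).2.
have := (low_congestion_uniq i1 unit_F2 lt2).2.
have := (low_congestion_uniq i2 unit_F2 lt2).1.
rewrite alg_F1 alg_F2 !link_switches_ext // /link_switches /= !eqxx !neq_inputs /=.
rewrite !cats1 inE andbT => /negP w_neq_v ubv uaw ubz uaz; apply: w_neq_v.
have card_a : #|'I_n.+2| = (size a).+1 by rewrite card_ord size_a.
have card_b : #|'I_n.+2| = (size b).+1 by rewrite card_ord size_b.
by rewrite -(full_rcons_uniq_eq card_a uaz uaw) (full_rcons_uniq_eq card_b ubz ubv).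
Qed.

Lemma online_congestion_two : exists F : seq (flow n.+2 R),
  all (fun f => fdem f == 1) F /\ demand_ok F /\ 2 <= congestion F (alg F).
Proof.
have [[unit_F1 ok_F1] [unit_F2 ok_F2]] := F1_F2_admissible.
case: (ltP (congestion F1 (alg F1)) 2) => [lt1|]; last by exists F1.
case: (ltP (congestion F2 (alg F2)) 2) => [lt2|]; last by exists F2.
by case: (low_congestion_contra lt1 lt2).
Qed.

End Adversary.

Theorem mainTheorem5 (N R : nat) (hN : (2 <= N)%N) (hR : (3 <= R)%N)
    (alg : seq (flow N R) -> seq 'I_N) :
  online_alg alg ->
  exists F : seq (flow N R),
    all (fun f => fdem f == 1) F /\ demand_ok F /\
    2 <= congestion F (alg F).
Proof.
case: N hN alg => [|[|n]] // _; case: R hR => [|[|[|q]]] // _ alg.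
exact: (@online_congestion_two n q.+3 ord0 (@Ordinal q.+3 1 isT) ord_max).
Qed.
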